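(* Let $q_1=\dfrac{\rho\varepsilon}{1-\rho(1-\varepsilon)}$, $q_2=(1-\varepsilon)^{I-1}$, and let $\bar\varepsilon\in(0,1)$ be the unique value of $\varepsilon$ with $q_1=q_2$. If $\varepsilon\ge\bar\varepsilon$ then for every information tree $\mathcal T$: $C^p_{\mathcal T}(G)=\Omega$ if $p\le q_1$ and $C^p_{\mathcal T}(G)=\varnothing$ if $p>q_1$.
   Context: Model. Fix an integer $I\ge2$, agents $\mathcal I=\{1,\dots,I\}$, a prior $\rho\in(0,1)$ and a loss probability $\varepsilon\in(0,1)$. A state of nature $\theta\in\{g,b\}$ has $\Pr(\theta=g)=\rho$. A forest $F$ on $\mathcal I$ is a collection of vertex-disjoint undirected trees $T^1,\dots,T^R$ whose vertex sets partition $\mathcal I$; a seeding $s=(s^1,\dots,s^R)$ chooses exactly one vertex $s^r$ of each $T^r$. The pair $\mathcal T=(F,s)$ is an information tree: orient each $T^r$ away from $s^r$ and add a root $0$ (the planner) with an arc $0\to s^r$ for each $r$. If $\theta=b$ no messages are sent. If $\theta=g$ the planner sends a message along each arc $0\to s^r$, and every agent who receives a message forwards it along every arc leaving her. Each transmission along an arc is lost independently with probability $\varepsilon$. Agent $i$ observes only $x_i\in\{y,n\}$ (received / not). $\Omega=\{g,b\}\times\{y,n\}^I$, $\mathbb P_{\mathcal T}$ the induced probability. $G=\{\theta=g\}$, $Y_i=\{x_i=y\}$, $N_i=\Omega\setminus Y_i$, $Y^*=\bigcap_iY_i$. $B^p_i(E)=\{\omega:\mathbb P_{\mathcal T}[E\mid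 x_i=x_i(\omega)]\ge p\}$, $B^p(E)=\bigcap_iB^p_i(E)$, $B^{p,0}(E)=E$, $B^{p,\ell}(E)=B^p(B^{p,\ell-1}(E))$, $C^p_{\mathcal T}(E)=\bigcap_{\ell\ge1}B^{p,\ell}(E)$. *)

From HB Require Import structures.
From mathcomp Require Import all_boot all_order all_algebra.
From mathcomp Require Import boolp classical_sets reals.
Set Implicit Arguments. Unset Strict Implicit. Unset Printing Implicit Defensive.
Import Order.TTheory GRing.Theory Num.Theory.
Local Open Scope ring_scope.

(* Agents are 'I_n (n = I).  An information tree (F, s) is encoded by the
   parent map of the oriented tree: par i = None means the arc 0 -> i
   (i is a seed), par i = Some j means the arc j -> i.  Every agent has
   exactly one incoming arc, which we index by the agent itself. *)
Definition tree_acyclic (n : nat) (par : 'I_n -> option 'I_n) : Prop :=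
  forall i : 'I_n, exists k : nat, iter k (fun o => obind par o) (Some i) = None.

(* j lies on the path from the planner to i (j = i allowed). *)
Definition anc (n : nat) (par : 'I_n -> option 'I_n) (i j : 'I_n) : bool :=
  [exists k : 'I_n.+1, iter k (fun o => obind par o) (Some i) == Some j].

(* Given the success pattern s of the transmissions (s j = arc into j not
   lost), the receipt profile x (true = y). *)
Definition recv (n : nat) (par : 'I_n -> option 'I_n)
  (s : {ffun 'I_n -> bool}) : {ffun 'I_n -> bool} :=
  [ffun i => [forall j, anc par i j ==> s j]].

(* Omega = {g,b} x {y,n}^I ; true = g, true = y *)
Definition Omega (n : nat) := (bool * {ffun 'I_n -> bool})%type.

Section Prob.
Variables (R : realType) (n : nat) (rho eps : R) (par : 'I_n -> option 'I_n).

Definition succ_weight (s : {ffun 'I_n -> bool}) : R :=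
  \prod_(j : 'I_n) (if s j then 1 - eps else eps).

Definition Pomega (w : Omega n) : R :=
  if w.1 then rho * \sum_(s : {ffun 'I_n -> bool} | recv par s == w.2) succ_weight s
  else (1 - rho) * ((w.2 == [ffun => false])%:R).

Definition probE (E : {set Omega n}) : R := \sum_(w in E) Pomega w.

Definition Xev (i : 'I_n) (v : bool) : {set Omega n} := [set w : Omega n | w.2 i == v].

Definition condP (E : {set Omega n}) (i : 'I_n) (v : bool) : R :=
  probE (E :&: Xev i v) / probE (Xev i v).

Definition Bi (p : R) (i : 'I_n) (E : {set Omega n}) : {set Omega n} :=
  [set w : Omega n | p <= condP E i (w.2 i)].

Definition Bp (p : R) (E : {set Omega n}) : {set Omega n} :=
  \bigcap_(i : 'I_n) Bi p i E.

Definition Cp (p : R) (E : {set Omega n}) : set (Omega n) :=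
  [set w : Omega n | forall l : nat, (0 < l)%N -> w \in iter l (Bp p) E].

End Prob.

Definition Gev (n : nat) : {set Omega n} := [set w : Omega n | w.1].

Definition q1 (R : realType) (rho eps : R) : R := rho * eps / (1 - rho * (1 - eps)).
Definition q2 (R : realType) (n : nat) (eps : R) : R := (1 - eps) ^+ (n.-1).

(* Since eps >= epsbar, q2 <= q1.  Whatever an agent observes, G keeps
   conditional probability at least q1, so for p <= q1 every iterate
   B^{p,l}(G) is the whole space.  For p > q1, an agent who hears nothing
   while everyone upstream of her is known to be informed can only blame her
   own incoming arc, which caps her belief at q1 < p; by induction on depth,
   B^{p,l}(G) forces every agent at depth < l to be informed.  Once this
   covers the whole tree, an informed seed believes "everyone is informed"
   only with probability q2 <= q1 < p, so the next iterate is empty. *)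
From Pilot Require Import Defs.
From HB Require Import structures.
From mathcomp Require Import all_boot all_order all_algebra.
From mathcomp Require Import boolp classical_sets reals.
From mathcomp Require Import ring lra zify.
Import Order.TTheory GRing.Theory Num.Theory.
Local Open Scope ring_scope.
Set Implicit Arguments. Unset Strict Implicit.

Section SuccessPatterns.
Variables (R : realType) (n : nat) (eps : R).
Hypotheses (eps_gt0 : 0 < eps) (eps_lt1 : eps < 1).
Local Notation succ_weight := (@succ_weight R n eps).
Local Ltac eps_lra := move: eps_gt0 eps_lt1; lra.

Definition succ_prob (Q : pred {ffun 'I_n -> bool}) : R :=
  \sum_(s | Q s) succ_weight s.

Lemma succ_weight_ge0 s : 0 <= succ_weight s.
Proof. by apply: prodr_ge0 => j _; case: (s j) => /=; eps_lra. Qed.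

Lemma succ_prob_ge0 Q : 0 <= succ_prob Q.
Proof. by apply: sumr_ge0 => s _; apply: succ_weight_ge0. Qed.

Lemma succ_prob_sub (Q Q' : pred {ffun 'I_n -> bool}) :
  (forall s, Q s -> Q' s) -> succ_prob Q <= succ_prob Q'.
Proof.
move=> QQ'; rewrite /succ_prob [leLHS]big_mkcond [leRHS]big_mkcond.
apply: ler_sum => s _; case: ifP => [/QQ' -> //|_].
by case: ifP => _ //; apply: succ_weight_ge0.
Qed.

Lemma eq_succ_prob (Q Q' : pred {ffun 'I_n -> bool}) :
  Q =1 Q' -> succ_prob Q = succ_prob Q'.
Proof. exact: eq_bigl. Qed.

Lemma sum_ffun_prod (F : 'I_n -> bool -> R) :
  \sum_(s : {ffun 'I_n -> bool}) \prod_j F j (s j) = \prod_j (F j true + F j false).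
Proof. by rewrite -bigA_distr_bigA; apply: eq_bigr => j _; rewrite big_bool. Qed.

Lemma succ_prob_coord j v :
  succ_prob (fun s => s j == v) = if v then 1 - eps else eps.
Proof.
pose F k (b : bool) : R :=
  (if k == j then (b == v)%:R else 1) * (if b then 1 - eps else eps).
transitivity (\sum_(s : {ffun 'I_n -> bool}) \prod_k F k (s k)).
  rewrite /succ_prob big_mkcond; apply: eq_bigr => s _.
  rewrite /succ_weight (bigD1 j) //= [RHS](bigD1 j) //= /F eqxx.
  under [in RHS]eq_bigr => k /negbTE -> do rewrite mul1r.
  by case: (s j == v); rewrite ?mul1r ?mul0r.
rewrite sum_ffun_prod (bigD1 j) //= big1 ?mulr1 => [|k /negbTE jk]; last first.
  by rewrite /F jk !mul1r subrK.
by rewrite /F eqxx; clear F; case: v; rewrite /= ?mul1r ?mul0r ?add0r ?addr0.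
Qed.

Lemma succ_prob_all : succ_prob (fun s => [forall k, s k]) = (1 - eps) ^+ n.
Proof.
transitivity (\sum_(s : {ffun 'I_n -> bool})
                \prod_k ((s k)%:R * (if s k then 1 - eps else eps))).
  rewrite /succ_prob big_mkcond; apply: eq_bigr => s _; rewrite big_split /=.
  case: (boolP [forall k, s k]) => [/forallP all_s | ].
    by rewrite big1 ?mul1r // => k _; rewrite all_s.
  by rewrite negb_forall => /existsP [k /negbTE sk]; rewrite (bigD1 k) //= sk !mul0r.
rewrite (sum_ffun_prod (fun _ b => b%:R * (if b then 1 - eps else eps))).
rewrite (eq_bigr (fun _ => 1 - eps)) ?prodr_const ?card_ord //.
by move=> k _; rewrite mul1r mul0r addr0.
Qed.

End SuccessPatterns.

Definition all_yes (n : nat) : {set Omega n} := [set w : Omega n | [forall k, w.2 k]].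

Section InformationTree.
Variables (n : nat) (par : 'I_n -> option 'I_n).
Local Notation up := (fun o => obind par o).
Local Notation recv := (recv par).

Lemma iter_up_None k : iter k up None = None.
Proof. by elim: k => //= k ->. Qed.

Lemma anc_refl i : anc par i i.
Proof. by apply/existsP; exists ord0. Qed.

Lemma anc_seed j k : par j = None -> anc par j k -> k = j.
Proof.
move=> seed_j /existsP [[[|t] _]] /=; first by move=> /eqP [].
by rewrite -/(iter t.+1 up (Some j)) iterSr /= seed_j iter_up_None.
Qed.

Lemma anc_parent j m k : par j = Some m -> anc par j k -> k = j \/ anc par m k.
Proof.
move=> par_j /existsP [[[|t] t_lt]] /=; first by move=> /eqP [] ->; left.
rewrite -/(iter t.+1 up (Some j)) iterSr /= par_j => iter_t; right.
by apply/existsP; exists (Ordinal (ltnW t_lt : (t < n.+1)%N)).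
Qed.

Lemma recv_arc s i : recv s i -> s i.
Proof. by rewrite ffunE => /forallP /(_ i); rewrite anc_refl. Qed.

Lemma recv_seed s j : par j = None -> recv s j = s j.
Proof.
move=> seed_j; apply/idP/idP => [|sj]; first exact: recv_arc.
by rewrite ffunE; apply/forallP => k; apply/implyP => /(anc_seed seed_j) ->.
Qed.

Lemma recv_parent s j m : par j = Some m -> recv s m -> s j -> recv s j.
Proof.
move=> par_j; rewrite !ffunE => /forallP recv_m sj.
by apply/forallP => k; apply/implyP => /(anc_parent par_j) [-> //| /(implyP (recv_m k))].
Qed.

Lemma forall_recv s : [forall k, recv s k] = [forall k, s k].
Proof.
apply/forallP/forallP => all_s k; first exact: recv_arc.
by rewrite ffunE; apply/forallP => j; rewrite all_s implybT.
Qed.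

(* [depth_lt l k]: the path from the planner to [k] has at most [l] arcs. *)
Definition depth_lt l k := iter l up (Some k) == None.

Lemma depth_lt_mono l l' k : (l <= l')%N -> depth_lt l k -> depth_lt l' k.
Proof.
elim: l' => [|l' IH]; first by rewrite leqn0 => /eqP ->.
rewrite leq_eqVlt => /orP [/eqP -> //| /IH lt_l /lt_l].
by rewrite /depth_lt /= => /eqP ->.
Qed.

Lemma depth_ltS l j : depth_lt l.+1 j ->
  par j = None \/ exists2 m, par j = Some m & depth_lt l m.
Proof.
by rewrite /depth_lt iterSr /=; case: (par j) => [m|] ?; [right; exists m | left].
Qed.

Lemma depth_lt_seed l k : depth_lt l k -> exists j, par j = None.
Proof.
elim: l k => [//|l IH] k.
by case/depth_ltS => [seed_k | [m _ /IH]]; first exists k.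
Qed.

Lemma depth_lt_bounded : tree_acyclic par -> exists L, forall k, depth_lt L k.
Proof.
move=> acyclic.
suff [L depth_s] : exists L, forall k, k \in enum 'I_n -> depth_lt L k.
  by exists L => k; apply: depth_s; rewrite mem_enum.
elim: (enum 'I_n) => [|a s [L depth_s]]; first by exists 0%N.
have [l /eqP depth_a] := acyclic a.
exists (maxn l L) => k; rewrite in_cons => /orP [/eqP -> | /depth_s].
  exact: depth_lt_mono (leq_maxl l L) depth_a.
exact: depth_lt_mono (leq_maxr l L).
Qed.

Definition informed l : {set Omega n} :=
  [set w : Omega n | [forall k, depth_lt l k ==> w.2 k]].

Lemma informed_all_yes L : (forall k, depth_lt L k) -> informed L \subset all_yes n.
Proof.
move=> depth_L; apply/fintype.subsetP => w; rewrite !inE => /forallP informed_w.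
by apply/forallP => k; apply: implyP (informed_w k) (depth_L k).
Qed.

End InformationTree.

Definition bad_outcome (n : nat) : Omega n := (false, [ffun => false]).

Section Beliefs.
Variables (R : realType) (n : nat) (rho eps : R) (par : 'I_n -> option 'I_n).
Hypotheses (rho_gt0 : 0 < rho) (rho_lt1 : rho < 1).
Hypotheses (eps_gt0 : 0 < eps) (eps_lt1 : eps < 1).
Local Notation PE := (probE rho eps par).
Local Notation condP := (condP rho eps par).
Local Notation Bp := (Bp rho eps par).
Local Notation recv := (recv par).
Local Notation q1 := (q1 rho eps).
Local Ltac param_lra := move: rho_gt0 rho_lt1 eps_gt0 eps_lt1; lra.
Local Ltac param_nra := move: rho_gt0 rho_lt1 eps_gt0 eps_lt1; nra.

Lemma Pomega_ge0 w : 0 <= Pomega rho eps par w.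
Proof.
case: w => [[] x] /=; apply: mulr_ge0; try param_lra.
  exact: succ_prob_ge0.
exact: ler0n.
Qed.

Lemma probE_ge0 (A : {set Omega n}) : 0 <= PE A.
Proof. by apply: sumr_ge0 => w _; apply: Pomega_ge0. Qed.

Lemma probE_sub (A B : {set Omega n}) : A \subset B -> PE A <= PE B.
Proof.
move=> /fintype.subsetP AB; rewrite /probE [leLHS]big_mkcond [leRHS]big_mkcond.
apply: ler_sum => w _; case: ifP => [/AB -> //| _].
by case: ifP => _ //; apply: Pomega_ge0.
Qed.

Lemma probE_split (A : {set Omega n}) : PE A =
  rho * succ_prob eps (fun s => (true, recv s) \in A) + (1 - rho) * (bad_outcome n \in A)%:R.
Proof.
rewrite /probE big_mkcond /=.
rewrite (_ : \sum_(w : Omega n) _ = \sum_(b : bool) \sum_(x : {ffun 'I_n -> bool})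
    (if (b, x) \in A then Pomega rho eps par (b, x) else 0)); last first.
  by rewrite pair_big; apply: eq_bigr => -[b x].
rewrite big_bool /=; congr (_ + _).
  rewrite /succ_prob mulr_sumr [RHS]big_mkcond [RHS](partition_big recv xpredT) //=.
  apply: eq_bigr => x _; rewrite /Pomega /=; case: ifP => Ax.
    by rewrite mulr_sumr; apply: eq_bigr => s /eqP ->; rewrite Ax.
  by symmetry; apply: big1 => s /eqP ->; rewrite Ax.
rewrite (bigD1 [ffun => false]) //= big1 ?addr0 => [|x /negbTE x_ne0]; last first.
  by rewrite /Pomega /= x_ne0 mulr0; case: ifP.
by rewrite /Pomega /= eqxx mulr1; case: ifP; rewrite ?mulr0 ?mulr1.
Qed.

Lemma probE_no i :
  PE (Xev i false) = rho * succ_prob eps (fun s => ~~ recv s i) + (1 - rho).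
Proof.
rewrite probE_split inE /= ffunE eqxx mulr1; congr (_ * _ + _).
by apply: eq_succ_prob => s; rewrite inE /= eqbF_neg.
Qed.

Lemma probE_yes i : PE (Xev i true) = rho * succ_prob eps (fun s => recv s i).
Proof.
rewrite probE_split inE /= ffunE /= mulr0 addr0; congr (_ * _).
by apply: eq_succ_prob => s; rewrite inE /= eqb_id.
Qed.

Lemma succ_prob_recv_gt0 i : 0 < succ_prob eps (fun s => recv s i).
Proof.
apply: (@lt_le_trans _ _ (succ_prob eps (fun s => [forall k, s k]))).
  by rewrite succ_prob_all; apply: exprn_gt0; param_lra.
by apply: (succ_prob_sub eps_gt0 eps_lt1) => s; rewrite -(forall_recv par) => /forallP.
Qed.

Lemma probE_Xev_gt0 i v : 0 < PE (Xev i v).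
Proof.
case: v; first by rewrite probE_yes mulr_gt0 ?succ_prob_recv_gt0.
rewrite probE_no; have := succ_prob_ge0 eps_gt0 eps_lt1 (fun s => ~~ recv s i); param_nra.
Qed.

Lemma condP_setT i v : condP [set: Omega n] i v = 1.
Proof. by rewrite /condP finset.setTI divff // gt_eqF ?probE_Xev_gt0. Qed.

Lemma condP_sub (E F : {set Omega n}) i v :
  E \subset F -> condP E i v <= condP F i v.
Proof.
move=> EF; apply: ler_wpM2r; first by rewrite invr_ge0 probE_ge0.
by apply/probE_sub/finset.setSI.
Qed.

Lemma Bp_sub p (E F : {set Omega n}) : E \subset F -> Bp p E \subset Bp p F.
Proof.
move=> EF; apply/fintype.subsetP => w /finset.bigcapP Bw; apply/finset.bigcapP => i _.
by move: (Bw i isT); rewrite !inE => /le_trans; apply; apply: condP_sub.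
Qed.

Lemma q1E : q1 = rho * eps / (rho * eps + (1 - rho)).
Proof. by rewrite /Defs.q1; congr (_ / _); ring. Qed.

Lemma q1_gt0 : 0 < q1.
Proof. rewrite q1E divr_gt0 //; param_nra. Qed.

Lemma q1_le1 : q1 <= 1.
Proof. rewrite q1E ler_pdivrMr ?mul1r; param_nra. Qed.

(* [x |-> rho x / (rho x + 1 - rho)] is increasing, and [q1] is its value at [eps]. *)
Lemma ratio_le_q1 (a b d : R) : a <= rho * b -> 0 <= b -> b <= eps -> b <= d ->
  a / (rho * d + (1 - rho)) <= q1.
Proof.
move=> ab b_ge0 b_le_eps b_le_d; rewrite q1E.
have den_gt0 x : 0 <= x -> 0 < rho * x + (1 - rho) by move=> ?; param_nra.
rewrite ler_pdivrMr ?den_gt0 ?(le_trans b_ge0) // mulrAC ler_pdivlMr ?den_gt0 //; last param_lra.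
have h1 : rho * (rho * eps) * b <= rho * (rho * eps) * d by rewrite ler_wpM2l //; param_nra.
have h2 : rho * (1 - rho) * b <= rho * (1 - rho) * eps by rewrite ler_wpM2l //; param_nra.
have h3 : a * (rho * eps + (1 - rho)) <= rho * b * (rho * eps + (1 - rho)).
  by rewrite ler_wpM2r //; param_nra.
apply: (le_trans h3); move: h1 h2; rewrite !mulrDr; lra.
Qed.

Lemma q1_le_condP_G i v : q1 <= condP (Gev n) i v.
Proof.
rewrite /condP probE_split !inE /= mulr0 addr0; case: v.
  rewrite probE_yes (@eq_succ_prob _ _ eps _ (fun s => recv s i)) => [|s]; last first.
    by rewrite !inE /= eqb_id.
  by rewrite divff ?q1_le1 // mulf_neq0 ?gt_eqF ?succ_prob_recv_gt0.
rewrite probE_no (@eq_succ_prob _ _ eps _ (fun s => ~~ recv s i)) => [|s]; last first.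
  by rewrite !inE /= eqbF_neg.
set d := succ_prob _ _.
have eps_le_d : eps <= d.
  rewrite -(succ_prob_coord eps i false).
  by apply: (succ_prob_sub eps_gt0 eps_lt1) => s; rewrite eqbF_neg; apply/contra/recv_arc.
rewrite q1E ler_pdivrMr; last param_nra.
rewrite mulrAC ler_pdivlMr; last by move: eps_le_d; param_nra.
have h : rho * (1 - rho) * eps <= rho * (1 - rho) * d by rewrite ler_wpM2l //; param_nra.
move: h; rewrite !mulrDr; lra.
Qed.

Lemma condP_no_le_q1 (E : {set Omega n}) k : bad_outcome n \notin E ->
  (forall s, (true, recv s) \in E -> ~~ recv s k -> ~~ s k) ->
  condP E k false <= q1.
Proof.
move=> bad_notin lost_k; rewrite /condP probE_no.
pose b := succ_prob eps (fun s => ((true, recv s) \in E) && ~~ recv s k).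
apply: (@ratio_le_q1 _ b).
- have bad_notin' : bad_outcome n \notin E :&: Xev k false.
    by rewrite inE negb_and bad_notin.
  rewrite probE_split (negbTE bad_notin') mulr0 addr0 ler_wpM2l //; first param_lra.
  by apply: (succ_prob_sub eps_gt0 eps_lt1) => s; rewrite !inE /= eqbF_neg.
- exact: succ_prob_ge0.
- rewrite -(succ_prob_coord eps k false).
  by apply: (succ_prob_sub eps_gt0 eps_lt1) => s /andP [/lost_k h /h]; rewrite eqbF_neg.
- by apply: (succ_prob_sub eps_gt0 eps_lt1) => s /andP [].
Qed.

Lemma Bp_informed p l (E : {set Omega n}) : q1 < p -> bad_outcome n \notin E ->
  E \subset informed par l -> Bp p E \subset informed par l.+1.
Proof.
move=> q1_lt_p bad_notin /fintype.subsetP E_informed.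
apply/fintype.subsetP => w /finset.bigcapP Bw; rewrite inE.
apply/forallP => k; apply/implyP => depth_k; apply/negPn/negP => wk.
have p_le : p <= condP E k false by move: (Bw k isT); rewrite inE (negbTE wk).
suff : condP E k false <= q1 by move: q1_lt_p p_le; lra.
apply: condP_no_le_q1 => // s E_s.
case/depth_ltS: depth_k => [seed_k | [m par_k depth_m]]; first by rewrite recv_seed.
have recv_m : recv s m.
  by move: (E_informed _ E_s); rewrite inE => /forallP /(_ m); rewrite depth_m.
by apply: contra; apply: recv_parent par_k recv_m.
Qed.

Lemma iter_Bp_informed p j : par j = None -> q1 < p -> forall l,
  bad_outcome n \notin iter l (Bp p) (Gev n) /\
  iter l (Bp p) (Gev n) \subset informed par l.
Proof.
move=> seed_j q1_lt_p; elim=> [|l [bad_notin E_informed]].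
  by split; [rewrite inE | apply/fintype.subsetP => w _; rewrite inE; apply/forallP].
have informed_l1 := Bp_informed q1_lt_p bad_notin E_informed.
split=> //=; apply: contra (fintype.subsetP informed_l1 _) _.
rewrite inE negb_forall; apply/existsP; exists j; rewrite ffunE implybF negbK.
by apply: (@depth_lt_mono _ _ 1) => //; rewrite /depth_lt /= seed_j.
Qed.

Lemma condP_all_yes_no k : condP (all_yes n) k false = 0.
Proof.
rewrite /condP (_ : _ :&: _ = finset.set0) ?/probE ?big_set0 ?mul0r //.
by apply/setP => w; rewrite !inE; apply/andP => -[/forallP ->].
Qed.

Lemma condP_all_yes_seed k : par k = None -> condP (all_yes n) k true = q2 n eps.
Proof.
move=> seed_k; rewrite /condP probE_yes probE_split !inE /=.
rewrite (_ : [forall k, _] = false); last by apply/negP => /forallP /(_ k); rewrite ffunE.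
rewrite mulr0 addr0 (@eq_succ_prob _ _ eps _ (fun s => [forall k, s k])) => [|s]; last first.
  rewrite !inE /= forall_recv eqb_id; apply/andP/idP => [[] //| all_s]; split=> //.
  by move: all_s; rewrite -(forall_recv par) => /forallP.
rewrite succ_prob_all (@eq_succ_prob _ _ eps _ (fun s => s k == true)) => [|s]; last first.
  by rewrite recv_seed // eqb_id.
have n_gt0 : (0 < n)%N by apply: leq_ltn_trans (ltn_ord k).
rewrite succ_prob_coord -{1}(prednK n_gt0) exprS mulrA mulrAC divff ?mul1r //.
by rewrite mulf_neq0 // gt_eqF //; param_lra.
Qed.

Lemma Bp_all_yes p k : par k = None -> q2 n eps <= q1 -> q1 < p ->
  Bp p (all_yes n) = finset.set0.
Proof.
move=> seed_k q2_le_q1 q1_lt_p; apply/setP => w; rewrite inE.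
apply/negP => /finset.bigcapP /(_ k isT); rewrite inE.
have := q1_gt0; case: (w.2 k); rewrite ?condP_all_yes_seed ?condP_all_yes_no //; lra.
Qed.

Lemma Bp_full p (E : {set Omega n}) : (forall i v, p <= condP E i v) ->
  Bp p E = [set: Omega n].
Proof.
by move=> p_le; apply/setP => w; rewrite inE; apply/finset.bigcapP => i _; rewrite inE.
Qed.

Lemma iter_Bp_G_full p : p <= q1 -> forall l, (0 < l)%N ->
  iter l (Bp p) (Gev n) = [set: Omega n].
Proof.
move=> p_le_q1; elim=> [//|[|l] IH _].
  by apply: Bp_full => i v; apply: le_trans p_le_q1 (q1_le_condP_G _ _).
rewrite iterS IH //; apply: Bp_full => i v.
by rewrite condP_setT (le_trans p_le_q1 q1_le1).
Qed.

End Beliefs.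

Lemma Cp_full (R : realType) n (rho eps : R) par p (E : {set Omega n}) :
  (forall l, (0 < l)%N -> iter l (Bp rho eps par p) E = [set: Omega n]) ->
  Cp rho eps par p E = setT.
Proof. by move=> full; apply/seteqP; split=> // w _ l /full ->; rewrite inE. Qed.

Lemma Cp_empty (R : realType) n (rho eps : R) par p (E : {set Omega n}) l :
  (0 < l)%N -> iter l (Bp rho eps par p) E = finset.set0 ->
  Cp rho eps par p E = set0.
Proof.
by move=> l_gt0 empty; apply/seteqP; split=> // w /(_ l l_gt0); rewrite empty inE.
Qed.

(* On [(0, 1)], [q1 x = q2 x] iff [x] is a root of
   [P x = rho x - (1 - x)^(n-1) (1 - rho + rho x)]; [P eps < 0 < P 1 = rho]. *)
Lemma q1_eq_q2_between (R : realType) n (rho eps : R) :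
  (2 <= n)%N -> 0 < rho < 1 -> 0 < eps < 1 -> q1 rho eps < q2 n eps ->
  exists2 x, eps < x < 1 & q1 rho x = q2 n x.
Proof.
move=> n_ge2 /andP [rho_gt0 rho_lt1] /andP [eps_gt0 eps_lt1] q1_lt_q2.
pose P : {poly R} := rho *: 'X - (1 - 'X) ^+ n.-1 * ((1 - rho)%:P + rho *: 'X).
have PE x : P.[x] = rho * x - (1 - x) ^+ n.-1 * ((1 - rho) + rho * x).
  by rewrite /P !hornerE.
have den_gt0 x : 0 <= x -> 0 < (1 - rho) + rho * x by move=> ?; nra.
have q1E x : q1 rho x = rho * x / ((1 - rho) + rho * x).
  by rewrite /q1; congr (_ / _); ring.
have n1_gt0 : (0 < n.-1)%N by lia.
have P1 : P.[1] = rho by rewrite PE subrr expr0n eqn0Ngt n1_gt0 mul0r subr0 mulr1.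
have P_eps : P.[eps] < 0.
  move: q1_lt_q2; rewrite q1E ltr_pdivrMr ?den_gt0 ?ltW // PE /q2; lra.
have P_bounds : P.[eps] <= 0 <= P.[1] by rewrite P1 (ltW P_eps) (ltW rho_gt0).
have [x /andP [eps_le_x x_le1] /eqP Px] := poly_ivt (ltW eps_lt1) P_bounds.
have eps_lt_x : eps < x.
  by rewrite lt_neqAle eps_le_x andbT; apply/eqP => eps_x; move: P_eps; rewrite eps_x Px ltxx.
have x_lt1 : x < 1.
  rewrite lt_neqAle x_le1 andbT; apply/eqP => x1.
  by move: rho_gt0; rewrite -P1 -x1 Px ltxx.
exists x; first by rewrite eps_lt_x.
move: Px; rewrite PE q1E /q2 => /eqP; rewrite subr_eq0 => /eqP {1}->.
by rewrite mulfK // gt_eqF // den_gt0 // (le_trans (ltW eps_gt0)).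
Qed.

Theorem proposition2 (R : realType) (n : nat) (rho eps : R) :
  (2 <= n)%N -> 0 < rho < 1 -> 0 < eps < 1 ->
  (forall epsbar : R, 0 < epsbar < 1 -> q1 rho epsbar = q2 n epsbar ->
     epsbar <= eps) ->
  forall (par : 'I_n -> option 'I_n), tree_acyclic par ->
  forall p : R,
    (p <= q1 rho eps -> Cp rho eps par p (Gev n) = setT) /\
    (q1 rho eps < p -> Cp rho eps par p (Gev n) = set0).
Proof.
move=> n_ge2 rho01 eps01 eps_ge_bar par acyclic p.
have /andP [rho_gt0 rho_lt1] := rho01; have /andP [eps_gt0 eps_lt1] := eps01.
split=> [p_le_q1 | q1_lt_p]; first exact/Cp_full/iter_Bp_G_full.
have q2_le_q1 : q2 n eps <= q1 rho eps.
  rewrite leNgt; apply/negP => /(q1_eq_q2_between n_ge2 rho01 eps01).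
  case=> x /andP [eps_lt_x x_lt1] q1_q2; suff : x <= eps by rewrite leNgt eps_lt_x.
  by apply: eps_ge_bar q1_q2; rewrite x_lt1 (lt_trans eps_gt0 eps_lt_x).
have [L depth_L] := depth_lt_bounded acyclic.
have n_gt0 : (0 < n)%N by apply: leq_trans n_ge2.
have [j seed_j] := depth_lt_seed (depth_L (Ordinal n_gt0)).
have [_ informed_L] := iter_Bp_informed rho_gt0 rho_lt1 eps_gt0 eps_lt1 seed_j q1_lt_p L.
apply: (Cp_empty (l := L.+1)) => //; apply/eqP; rewrite -finset.subset0.
rewrite -(Bp_all_yes rho_gt0 rho_lt1 eps_gt0 eps_lt1 seed_j q2_le_q1 q1_lt_p).
exact/Bp_sub/(fintype.subset_trans informed_L)/informed_all_yes.
Qed.
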